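(* Let $F_1$ and $F_2$ be vertex-disjoint fans and let $c_i:F_i\to T_7$ ($i=1,2$) be homomorphisms such that $c_i(r(F_i))=0$, $c_i(fl(F_i))\neq 0$ and $c_i(ll(F_i))\neq 0$. Then for every choice of directions of the arcs $s_1$ and $s_2$, the composition $F=F_1+F_2$ admits two homomorphisms $d_1,d_2:F\to T_7$ such that (c1) $d_1(x)=d_2(x)=c_1(x)$ for all vertices $x$ of $F_1$, and (c2) $d_1(ll(F))\neq d_2(ll(F))$.
   Context: $T_7$ is the tournament with vertex set $\{0,1,\dots,6\}$ in which $(i,j)$ is an arc if and only if $j-i\equiv 1,2,$ or $4 \pmod 7$. A homomorphism $c:F\to T_7$ of an oriented graph $F$ is a map on vertices such that $(c(u),c(v))$ is an arc of $T_7$ whenever $(u,v)$ is an arc of $F$. A fan $F$ is an oriented planar graph consisting of an oriented rooted plane tree (children of each vertex linearly ordered, as given by the planar embedding) with root $r=r(F)$, whose leaves (the vertices other than the root with no children), listed in left-to-right order, are $x_1,\dots,x_m$ ($m\ge 1$), together with, for each $1\le i\le m-1$, one arc between $x_i$ and $x_{i+1}$ (either $(x_i,x_{i+1})$ or $(x_{i+1},x_i)$). Write $fl(F)=x_1$ (first leaf) and $ll(F)=x_m$ (last leaf). The composition $F=F_1+F_2$ of two fans is the fan obtained from the disjoint union of $F_1$ and $F_2$ by adding an arc $s_1$ between $r(F_1)$ and $r(F_2)$ (in either direction) and an arc $s_2$ between $ll(F_1)$ and $fl(F_2)$ (in either direction); its root is $r(F)=r(F_1)$, $r(F_2)$ becomes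 the last child of $r(F_1)$, $fl(F)=fl(F_1)$ and $ll(F)=ll(F_2)$. *)

From mathcomp Require Import all_boot.
Set Implicit Arguments. Unset Strict Implicit. Unset Printing Implicit Defensive.

Definition T7arc (i j : 'I_7) : bool := ((j + 7 - i) %% 7) \in [:: 1; 2; 4].

(* Oriented rooted plane trees: a node is the ordered list of its children,
   each child tagged with the direction of the tree edge:
   true = (parent, child) is the arc, false = (child, parent) is the arc. *)
Inductive ptree : Type := Node of seq (bool * ptree).

Definition children (t : ptree) : seq (bool * ptree) := let: Node cs := t in cs.

(* Vertices are addressed by paths from the root: [::] is the root and
   rcons a i is the i-th child (0-based, left to right) of the vertex a. *)
Fixpoint subtree (t : ptree) (a : seq nat) : option ptree :=
  match a with
  | [::] => Some t
  | i :: a' => match ohead (drop i (children t)) with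
               | Some (_, t') => subtree t' a'
               | None => None
               end
  end.

Definition is_vertex (t : ptree) (a : seq nat) : bool :=
  if subtree t a is Some _ then true else false.

Definition child_dir (t : ptree) (a : seq nat) (i : nat) : option bool :=
  match subtree t a with
  | Some t' => omap fst (ohead (drop i (children t')))
  | None => None
  end.

Fixpoint lv (t : ptree) : seq (seq nat) :=
  let: Node cs := t in
  if cs is [::] then [:: [::]] else
  (fix aux (i : nat) (cs : seq (bool * ptree)) : seq (seq nat) :=
     match cs with
     | [::] => [::]
     | (_, c) :: cs' => map (cons i) (lv c) ++ aux i.+1 cs'
     end) 0 cs.

(* A fan: a tree together with the directions of the arcs between consecutive
   leaves (true = (x_k, x_{k+1}), false = (x_{k+1}, x_k)). *)
Definition fan : Type := (ptree * seq bool)%type.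

(* leaves: non-root vertices with no children, in left-to-right order *)
Definition leaves (F : fan) : seq (seq nat) :=
  if children F.1 is [::] then [::] else lv F.1.

(* well-formedness: m >= 1 leaves and exactly m-1 leaf-path arcs *)
Definition fan_wf (F : fan) : Prop := size (leaves F) = (size F.2).+1.

Definition fan_root (F : fan) : seq nat := [::].
Definition fl (F : fan) : seq nat := head [::] (leaves F).
Definition ll (F : fan) : seq nat := last [::] (leaves F).

Definition vertex (F : fan) (a : seq nat) : bool := is_vertex F.1 a.

Definition arc (F : fan) (u v : seq nat) : Prop :=
  (exists i, v = rcons u i /\ child_dir F.1 u i = Some true) \/
  (exists i, u = rcons v i /\ child_dir F.1 v i = Some false) \/
  (exists k, k.+1 < size (leaves F) /\
     ((nth [::] (leaves F) k = u /\ nth [::] (leaves F) k.+1 = v /\ nth true F.2 k = true) \/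
      (nth [::] (leaves F) k = v /\ nth [::] (leaves F) k.+1 = u /\ nth true F.2 k = false))).

(* homomorphism F -> T_7 (values outside the vertex set are irrelevant) *)
Definition hom (F : fan) (c : seq nat -> 'I_7) : Prop :=
  forall u v, arc F u v -> T7arc (c u) (c v).

(* Composition F1 + F2 with s1 the direction of the arc between r(F1) and
   r(F2) (true = (r(F1), r(F2))) and s2 the direction of the arc between
   ll(F1) and fl(F2) (true = (ll(F1), fl(F2))).  r(F2) becomes the last child
   of r(F1); a vertex x of F1 keeps its address x, and a vertex y of F2 gets
   the address (size (children F1.1)) :: y (so the union is disjoint). *)
Definition compose (F1 F2 : fan) (s1 s2 : bool) : fan :=
  (Node (children F1.1 ++ [:: (s1, F2.1)]), F1.2 ++ s2 :: F2.2).

From mathcomp Require Import all_boot.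

(* Composing c2 with an endomorphism phi of T_7 keeps it a homomorphism, and
   gluing c1 with phi \o c2 only requires phi to orient the two new arcs
   correctly: between 0 = c1 (r F1) and phi 0 = phi (c2 (r F2)), and between
   c1 (ll F1) and phi (c2 (fl F2)).  The maps x |-> a x + b with a in {1, 2, 4},
   the nonzero squares mod 7, are automorphisms of T_7, and a finite check shows
   that, whatever the nonzero colours and the directions of s1 and s2, two of
   them that orient both arcs correctly disagree at c2 (ll F2). *)

Set Implicit Arguments.
Unset Strict Implicit.
Unset Printing Implicit Defensive.

Section ArcsAlong.

Variables (T : Type) (x0 : T) (R : bool -> T -> T -> Prop).

Definition arcs_along (ls : seq bool) (s : seq T) : Prop :=
  forall k, k.+1 < size s -> R (nth true ls k) (nth x0 s k) (nth x0 s k.+1).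

Lemma arcs_along_cat ls1 b ls2 s1 s2 :
  size s1 = (size ls1).+1 -> arcs_along ls1 s1 -> R b (last x0 s1) (head x0 s2) ->
  arcs_along ls2 s2 -> arcs_along (ls1 ++ b :: ls2) (s1 ++ s2).
Proof.
move=> sz1 h1 hb h2 k; rewrite size_cat sz1 => lt_k; rewrite !nth_cat sz1 !ltnS.
case: (ltngtP k (size ls1)) => [lt_k1 | gt_k1 | ->].
- by apply: h1; rewrite sz1 ltnS.
- move: lt_k; have [j ->] : exists j, k = (size ls1).+1 + j.
    by exists (k - (size ls1).+1); rewrite subnKC.
  rewrite -addnS ltn_add2l !addKn addSnnS addKn; exact: h2.
- rewrite !subnn -[size ls1]/((size ls1).+1.-1) -sz1 nth_last.
  by case: s2 {lt_k h2} hb.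
Qed.

End ArcsAlong.

Fixpoint lv_from (i : nat) (cs : seq (bool * ptree)) : seq (seq nat) :=
  if cs is (_, c) :: cs' then map (cons i) (lv c) ++ lv_from i.+1 cs' else [::].

Lemma leavesE (F : fan) : leaves F = lv_from 0 (children F.1).
Proof. by case: F => [[[|? ?]] ?]. Qed.

Lemma lv_leaves (F : fan) : fan_wf F -> lv F.1 = leaves F.
Proof. by case: F => [[[|? ?]] ?]. Qed.

Lemma lv_from_cat i cs cs' :
  lv_from i (cs ++ cs') = lv_from i cs ++ lv_from (i + size cs) cs'.
Proof.
elim: cs i => [|[b c] cs IH] i /=; first by rewrite addn0.
by rewrite IH catA addSnnS.
Qed.

Lemma mem_lv_from i cs x :
  x \in lv_from i cs -> exists j y, x = j :: y /\ j < i + size cs.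
Proof.
elim: cs i => [|[b c] cs IH] i //=.
rewrite mem_cat => /orP [/mapP [y _ ->] | /IH [j [y [-> lt_j]]]].
  by exists i, y; rewrite addnS ltnS leq_addr.
by exists j, y; rewrite addnS -addSn.
Qed.

Lemma vertex_cons (F : fan) j y : vertex F (j :: y) -> j < size (children F.1).
Proof.
case: F => [[cs] l]; rewrite /vertex /is_vertex /=.
by case: ltnP => // le_cs; rewrite drop_oversize.
Qed.

Lemma wf_leaves_neq0 F : fan_wf F -> leaves F != [::].
Proof. by move=> wf; rewrite -size_eq0 wf. Qed.

Lemma leaves_compose F1 F2 s1 s2 :
  leaves (compose F1 F2 s1 s2) =
  leaves F1 ++ map (cons (size (children F1.1))) (lv F2.1).
Proof. by rewrite !leavesE /= lv_from_cat /= cats0. Qed.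

Lemma ll_compose F1 F2 s1 s2 :
  fan_wf F2 -> ll (compose F1 F2 s1 s2) = size (children F1.1) :: ll F2.
Proof.
move=> wf2; move: (wf_leaves_neq0 wf2).
rewrite /ll leaves_compose lv_leaves //.
by case: (leaves F2) => // y L _; rewrite last_cat /= last_map.
Qed.

Lemma ohead_drop_cat1 (T : Type) (s : seq T) x i :
  ohead (drop i (s ++ [:: x])) =
  if i < size s then ohead (drop i s) else if i == size s then Some x else None.
Proof. by elim: s i => [|y s IH] [|i] //=. Qed.

Lemma child_dir_cat1_nil cs x i :
  child_dir (Node (cs ++ [:: x])) [::] i =
  if i < size cs then child_dir (Node cs) [::] i
  else if i == size cs then Some x.1 else None.
Proof. by rewrite /child_dir /= ohead_drop_cat1; case: ifP => //; case: ifP. Qed.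

Lemma child_dir_cat1_cons cs b t j a i :
  child_dir (Node (cs ++ [:: (b, t)])) (j :: a) i =
  if j < size cs then child_dir (Node cs) (j :: a) i
  else if j == size cs then child_dir t a i else None.
Proof. by rewrite /child_dir /= ohead_drop_cat1; case: ifP => //; case: ifP. Qed.

Definition oarc (b : bool) (x y : 'I_7) : bool := if b then T7arc x y else T7arc y x.

Definition tree_hom (t : ptree) (c : seq nat -> 'I_7) : Prop :=
  forall u i b, child_dir t u i = Some b -> oarc b (c u) (c (rcons u i)).

Lemma homP F c :
  hom F c <-> tree_hom F.1 c /\ arcs_along ord0 oarc F.2 (map c (leaves F)).
Proof.
split=> [hc | [ht hp] u v].
  split=> [u i [] ci | k]; first by apply: hc; left; exists i.
    by apply: hc; right; left; exists i.
  rewrite size_map => lt_k; rewrite !(nth_map [::]) ?(ltnW lt_k) //.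
  case E: (nth true F.2 k); apply: hc; right; right; exists k.
    by split=> //; left.
  by split=> //; right.
move=> [[i [-> /ht //]] | [[i [-> /ht //]] | [k [lt_k huv]]]].
have := hp k; rewrite size_map !(nth_map [::]) ?(ltnW lt_k) // => /(_ lt_k).
by case: huv => [[-> [-> ->]] | [-> [-> ->]]].
Qed.

Section Glue.

Variables (T : Type) (k : nat) (c1 c2 : seq nat -> T).

Definition glue (x : seq nat) : T :=
  if x is j :: y then if j == k then c2 y else c1 x else c1 x.

Lemma glue_shift y : glue (k :: y) = c2 y.
Proof. by rewrite /= eqxx. Qed.

Lemma glue_lt j y : j < k -> glue (j :: y) = c1 (j :: y).
Proof. by move=> lt_jk; rewrite /= ltn_eqF. Qed.

End Glue.

Lemma glue_vertex T F (c1 c2 : seq nat -> T) x :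
  vertex F x -> glue (size (children F.1)) c1 c2 x = c1 x.
Proof. by case: x => // j y /vertex_cons; apply: glue_lt. Qed.

Lemma glue_leaves T F (c1 c2 : seq nat -> T) :
  {in leaves F, glue (size (children F.1)) c1 c2 =1 c1}.
Proof. by move=> x; rewrite leavesE => /mem_lv_from [j [y [-> ?]]]; apply: glue_lt. Qed.

Lemma tree_hom_compose t1 t2 c1 c2 s1 :
  tree_hom t1 c1 -> tree_hom t2 c2 -> oarc s1 (c1 [::]) (c2 [::]) ->
  tree_hom (Node (children t1 ++ [:: (s1, t2)])) (glue (size (children t1)) c1 c2).
Proof.
case: t1 => cs /= h1 h2 hr [|j a] i b.
  rewrite child_dir_cat1_nil; case: ltnP => [lt_i ci | _].
    by rewrite /= ltn_eqF //; apply: h1.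
  by case: eqP => // -> [<-]; rewrite /= eqxx.
rewrite child_dir_cat1_cons rcons_cons; case: ltnP => [lt_j ci | _].
  by rewrite !glue_lt //; apply: h1.
by case: eqP => // -> ci; rewrite !glue_shift; apply: h2.
Qed.

Lemma hom_compose F1 F2 c1 c2 s1 s2 :
  fan_wf F1 -> fan_wf F2 -> hom F1 c1 -> hom F2 c2 ->
  oarc s1 (c1 [::]) (c2 [::]) -> oarc s2 (c1 (ll F1)) (c2 (fl F2)) ->
  hom (compose F1 F2 s1 s2) (glue (size (children F1.1)) c1 c2).
Proof.
move=> wf1 wf2 /homP [t1 p1] /homP [t2 p2] hr hl; apply/homP; split.
  exact: tree_hom_compose.
rewrite leaves_compose lv_leaves // map_cat -map_comp (eq_map (glue_shift _ _ _)).
rewrite (eq_in_map _ c1 (leaves F1)).1; last exact: glue_leaves.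
apply: arcs_along_cat => //; first by rewrite size_map wf1.
move: hl; rewrite /ll /fl.
case: (leaves F1) (wf_leaves_neq0 wf1) => // y1 L1 _.
case: (leaves F2) (wf_leaves_neq0 wf2) => // y2 L2 _.
by rewrite /= last_map.
Qed.

Lemma hom_comp F c (phi : 'I_7 -> 'I_7) :
  {homo phi : x y / T7arc x y} -> hom F c -> hom F (phi \o c).
Proof. by move=> hphi hc u v /hc /hphi. Qed.

Definition ord7 (i : nat) : 'I_7 := Ordinal (ltn_pmod i (isT : 0 < 7)).

Definition aff (a : nat) (b x : 'I_7) : 'I_7 := ord7 (a * x + b).

(* [ord_enum 7] does not compute, since its membership proofs go through [idP]. *)
Definition ords7 : seq 'I_7 := map ord7 (iota 0 7).

Lemma mem_ords7 x : x \in ords7.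
Proof.
apply/mapP; exists (val x); first by rewrite mem_iota ltn_ord.
by apply: val_inj; rewrite /= modn_small.
Qed.

Lemma aff_homo a b : a \in [:: 1; 2; 4] -> {homo aff a b : x y / T7arc x y}.
Proof.
have : all (fun a => all (fun b => all (fun x => all (fun y =>
         T7arc x y ==> T7arc (aff a b x) (aff a b y)) ords7) ords7) ords7) [:: 1; 2; 4].
  by vm_compute.
move/allP=> h /h /allP/(_ b (mem_ords7 b)) hb x y.
by move/allP: hb => /(_ x (mem_ords7 x))/allP/(_ y (mem_ords7 y))/implyP.
Qed.

Definition aff_params : seq (nat * 'I_7) := [seq (a, b) | a <- [:: 1; 2; 4], b <- ords7].

Definition aff_fits s1 s2 (p q : 'I_7) (ab : nat * 'I_7) : bool :=
  oarc s1 ord0 (aff ab.1 ab.2 ord0) && oarc s2 p (aff ab.1 ab.2 q).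

Definition aff_separate s1 s2 (p q r : 'I_7) : bool :=
  has (fun ab => aff_fits s1 s2 p q ab && has (fun ab' =>
    aff_fits s1 s2 p q ab' && (aff ab.1 ab.2 r != aff ab'.1 ab'.2 r)) aff_params) aff_params.

Lemma mem_behead_ords7 x : x != ord0 -> x \in behead ords7.
Proof.
move=> x0; move: (mem_ords7 x); rewrite -[ords7]/(ord7 0 :: behead ords7) inE.
by case/orP=> // /eqP x_eq; move: x0; rewrite x_eq.
Qed.

Lemma aff_separate_check :
  all (fun s1 => all (fun s2 => all (fun p => all (fun q => all (fun r =>
    aff_separate s1 s2 p q r) (behead ords7)) (behead ords7)) (behead ords7))
    [:: true; false]) [:: true; false].
Proof. by vm_compute. Qed.

Lemma aff_separate_all s1 s2 (p q r : 'I_7) :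
  p != ord0 -> q != ord0 -> r != ord0 -> aff_separate s1 s2 p q r.
Proof.
move=> /mem_behead_ords7 p0 /mem_behead_ords7 q0 /mem_behead_ords7 r0.
have mem_bool (b : bool) : b \in [:: true; false] by case: b.
move/allP/(_ s1 (mem_bool s1))/allP/(_ s2 (mem_bool s2)): aff_separate_check.
by move/allP/(_ p p0)/allP/(_ q q0)/allP/(_ r r0).
Qed.

Lemma T7_two_endos s1 s2 (p q r : 'I_7) :
  p != ord0 -> q != ord0 -> r != ord0 ->
  exists phi1 phi2 : 'I_7 -> 'I_7,
    [/\ {homo phi1 : x y / T7arc x y}, {homo phi2 : x y / T7arc x y},
        oarc s1 ord0 (phi1 ord0) && oarc s2 p (phi1 q),
        oarc s1 ord0 (phi2 ord0) && oarc s2 p (phi2 q) & phi1 r != phi2 r].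
Proof.
move=> p0 q0 r0.
have /hasP [[a1 b1] ab1 /andP [fit1]] := aff_separate_all s1 s2 p0 q0 r0.
move=> /hasP [[a2 b2] ab2 /andP [fit2 neq]].
have params_homo a b : (a, b) \in aff_params -> {homo aff a b : x y / T7arc x y}.
  by case/allpairsP=> [[a' b'] [ha _ [-> ->]]]; apply: aff_homo.
by exists (aff a1 b1), (aff a2 b2); split; try apply: params_homo.
Qed.

Theorem lemma3 (F1 F2 : fan) (c1 c2 : seq nat -> 'I_7) :
  fan_wf F1 -> fan_wf F2 ->
  hom F1 c1 -> hom F2 c2 ->
  nat_of_ord (c1 (fan_root F1)) = 0 -> nat_of_ord (c1 (fl F1)) <> 0 ->
  nat_of_ord (c1 (ll F1)) <> 0 ->
  nat_of_ord (c2 (fan_root F2)) = 0 -> nat_of_ord (c2 (fl F2)) <> 0 ->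
  nat_of_ord (c2 (ll F2)) <> 0 ->
  forall s1 s2 : bool,
  exists d1 d2 : seq nat -> 'I_7,
    hom (compose F1 F2 s1 s2) d1 /\ hom (compose F1 F2 s1 s2) d2 /\
    (forall x, vertex F1 x -> d1 x = c1 x /\ d2 x = c1 x) /\
    d1 (ll (compose F1 F2 s1 s2)) <> d2 (ll (compose F1 F2 s1 s2)).
Proof.
move=> wf1 wf2 hc1 hc2 r1 _ e1 r2 f2 e2 s1 s2.
have nz (x : 'I_7) : nat_of_ord x <> 0 -> x != ord0.
  by move=> x_neq0; apply/eqP=> x0; rewrite x0 in x_neq0.
have root0 (c : seq nat -> 'I_7) : nat_of_ord (c [::]) = 0 -> c [::] = ord0.
  by move=> c0; apply: val_inj.
have [phi1 [phi2 [hphi1 hphi2 fit1 fit2 neq]]] :=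
  T7_two_endos s1 s2 (nz _ e1) (nz _ f2) (nz _ e2).
set k := size (children F1.1).
have hom_glue phi : {homo phi : x y / T7arc x y} ->
    oarc s1 ord0 (phi ord0) && oarc s2 (c1 (ll F1)) (phi (c2 (fl F2))) ->
    hom (compose F1 F2 s1 s2) (glue k c1 (phi \o c2)).
  move=> hphi /andP [fit_r fit_l]; apply: hom_compose => //; first exact: hom_comp.
  by rewrite /= (root0 c1) // (root0 c2).
exists (glue k c1 (phi1 \o c2)), (glue k c1 (phi2 \o c2)).
split; first exact: hom_glue.
split; first exact: hom_glue.
split; first by move=> x vx; rewrite !glue_vertex.
by rewrite ll_compose // !glue_shift; apply/eqP.
Qed.
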